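(* Let $\kappa\in\mathbb{C}$, $l\ge N-1$, $\mu=(\mu_1,\ldots,\mu_{N-1})$ and $\lambda=(\lambda_1,\ldots,\lambda_l)$. Then \[ \Delta(\mu,\lambda)^{-\kappa}\, D_{\mu_{N-1}}(-\kappa)\cdots D_{\mu_1}(-\kappa)\,\Delta(\mu,\lambda)^{\kappa}=\kappa^{N-1}Z_1(\mu,\lambda), \] where $Z_1(\mu,\lambda)$ is the coefficient of $x_1\cdots x_l$ in \[ \frac{1}{(l-N+1)!}\prod_{j=1}^l\Big(\sum_{i=1}^{N-1}\frac{x_i}{\mu_i-\lambda_j}+x_N+\cdots+x_l\Big). \]
   Context: $\Delta(\mu,\lambda)=\prod_{i,j}(\mu_i-\lambda_j)$, which is symmetric in $\mu$. The rational Dunkl operators in $\mu$ are $D_{\mu_i}(c)=\partial_{\mu_i}+c\sum_{j\neq i}\frac{1}{\mu_i-\mu_j}(1-s_{ij})$, $s_{ij}$ exchanging $\mu_i,\mu_j$. They are applied successively (first $D_{\mu_1}$) to functions of the form $\Delta(\mu,\lambda)^\kappa R(\mu)$ with $R$ rational, where $\Delta(\mu,\lambda)^\kappa$ is a fixed branch and $s_{ij}(\Delta(\mu,\lambda)^\kappa R)=\Delta(\mu,\lambda)^\kappa s_{ij}(R)$. *)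

(* rational functions in the variables mu_1..mu_n, n = N-1,
   over an algebraically closed numeric field C (e.g. the complex numbers),
   represented as the fraction field of multivariate polynomials. *)
From HB Require Import structures.
From mathcomp Require Import all_boot all_order all_algebra all_fingroup.
From mathcomp Require Import generic_quotient fraction.
From mathcomp Require Import mpoly.
Set Implicit Arguments. Unset Strict Implicit. Unset Printing Implicit Defensive.
Import GRing.Theory Num.Theory.
Local Open Scope ring_scope.
Local Open Scope quotient_scope.
Local Notation "x %:F" := (@FracField.tofrac _ x).
Local Notation "p ^`M ( i )" := (mderiv i p).

Section RatFun.
Variables (C : numClosedFieldType) (n : nat).

Definition ratfun := {fraction {mpoly C[n]}}.

Definition muF (i : 'I_n) : ratfun := ('X_i : {mpoly C[n]})%:F.
Definition cstF (a : C) : ratfun := (a%:MP : {mpoly C[n]})%:F.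

Definition fderiv (i : 'I_n) (f : ratfun) : ratfun :=
  let r := repr f in
  ((\n_r)^`M(i) * \d_r - \n_r * (\d_r)^`M(i))%:F / ((\d_r) ^+ 2)%:F.

Definition fsym (s : 'S_n) (f : ratfun) : ratfun :=
  let r := repr f in (msym s \n_r)%:F / (msym s \d_r)%:F.

Definition fswap (i j : 'I_n) (f : ratfun) : ratfun := fsym (tperm i j) f.

Definition DeltaF (l : nat) (lam : 'I_l -> C) : ratfun :=
  \prod_(i < n) \prod_(j < l) (muF i - cstF (lam j)).

(* Action of the rational Dunkl operator D_{mu_i}(c) on functions of the form
   Delta^kappa R, with R rational: the function Delta^kappa R is encoded by R.
   Since s_{ik}(Delta^kappa R) = Delta^kappa s_{ik}(R) and
   d/dmu_i (Delta^kappa R) = Delta^kappa (kappa R (d_i Delta)/Delta + d_i R),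
   D_{mu_i}(c)(Delta^kappa R) = Delta^kappa (dunklK ... R). *)
Definition dunklK (l : nat) (lam : 'I_l -> C) (kappa c : C) (i : 'I_n)
    (R : ratfun) : ratfun :=
  cstF kappa * R * (fderiv i (DeltaF lam) / DeltaF lam) + fderiv i R
  + cstF c * \sum_(k < n | k != i) (R - fswap i k R) / (muF i - muF k).

(* D_{mu_{n}} ... D_{mu_1} applied (first D_{mu_1}) to Delta^kappa R,
   returning the rational factor in front of Delta^kappa. *)
Definition dunkl_chain (l : nat) (lam : 'I_l -> C) (kappa c : C)
    (R : ratfun) : ratfun :=
  foldl (fun acc (i : 'I_n) => dunklK lam kappa c i acc) R (enum 'I_n).

End RatFun.

(* Z_1(mu, lambda): coefficient of x_1 ... x_l in
   1/(l-n)! * prod_{j} ( sum_{i<n} x_i/(mu_i - lambda_j) + x_{n+1} + ... + x_l ),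
   a polynomial in x_1..x_l with rational-function coefficients. *)
Definition Zweight (C : numClosedFieldType) (n l : nat) (lam : 'I_l -> C)
    (j : 'I_l) (i : 'I_l) : ratfun C n :=
  match @insub nat (fun k => (k < n)%N) 'I_n (val i) with
  | Some i' => (@muF C n i' - @cstF C n (lam j))^-1
  | None => 1
  end.

Definition Zpoly (C : numClosedFieldType) (n l : nat) (lam : 'I_l -> C)
    : {mpoly (ratfun C n)[l]} :=
  ((l - n)`!%:R)^-1 *:
    \prod_(j < l) \sum_(i < l) @Zweight C n l lam j i *: 'X_i.

Definition Z1 (C : numClosedFieldType) (n l : nat) (lam : 'I_l -> C)
    : ratfun C n :=
  (@Zpoly C n l lam)@_[multinom 1%N | i < l].

From Pilot Require Import Defs.
From HB Require Import structures.
From mathcomp Require Import all_boot all_order all_algebra all_fingroup.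
From mathcomp Require Import generic_quotient fraction mpoly ring.
Set Implicit Arguments. Unset Strict Implicit. Unset Printing Implicit Defensive.
Import GRing.Theory Num.Theory.
Local Open Scope ring_scope.
Local Open Scope quotient_scope.
Local Notation "x %:F" := (@FracField.tofrac _ x).
Local Notation "p ^`M ( i )" := (mderiv i p).
Local Notation fsym := Defs.fsym.

(* Write e_i(j) = (mu_i - lambda_j)^-1 and let P_m be the permanent of the
   l x l matrix whose columns i < m are e_i and whose other columns are all
   ones.  By induction on m, applying D_{mu_1}, ..., D_{mu_m} to Delta^kappa
   gives Delta^kappa kappa^m / (l - m)! P_m; for m = N - 1 this is the claim,
   since (l - N + 1)! Z_1 = P_{N-1}.
   In the step, the derivative of Delta^kappa multiplies P_m by kappa
   sum_j e_m(j).  Expanding this product column by column yields (l - m) P_{m+1}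
   (from the ones columns) plus, for each k < m, the permanent with column
   e_k replaced by e_k e_m.  The difference quotients of the Dunkl operator
   cancel exactly these: the swap of mu_m and mu_k replaces column e_k by e_m,
   and e_k - e_m = (mu_m - mu_k) e_k e_m. *)

Lemma subf_div (F : fieldType) (a b c d : F) : b != 0 -> d != 0 ->
  a / b - c / d = (a * d - c * b) / (b * d).
Proof. by move=> hb hd; field; rewrite hb hd. Qed.

Lemma invf_subB (F : fieldType) (x y c : F) : x - c != 0 -> y - c != 0 ->
  (x - c)^-1 - (y - c)^-1 = (y - x) * ((x - c)^-1 * (y - c)^-1).
Proof. by move=> hx hy; field; rewrite hx hy. Qed.

Lemma frac_repr (R : idomainType) (f : {fraction R}) :
  f = (\n_(repr f))%:F / (\d_(repr f))%:F.
Proof.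
set r := repr f; have hd : \d_r != 0 := denom_ratioP _.
apply: (@mulIf _ (\d_r)%:F); first by rewrite tofrac_eq0.
rewrite mulfVK ?tofrac_eq0 // -[f]reprK -/r !piE.
apply/eqmodP; rewrite /= FracField.equivfE /FracField.mulf.
rewrite !(numer_Ratio, denom_Ratio) ?mulf_neq0 ?oner_eq0 //.
by rewrite !mulr1 mulrC.
Qed.

Lemma fracP (R : idomainType) (f : {fraction R}) :
  exists p q, q != 0 /\ f = p%:F / q%:F.
Proof. by exists (\n_(repr f)), (\d_(repr f)); split; [apply: denom_ratioP|apply: frac_repr]. Qed.

Lemma tofrac_div_eq (R : idomainType) (a b c d : R) : b != 0 -> d != 0 ->
  (a%:F / b%:F == c%:F / d%:F) = (a * d == c * b).
Proof. by move=> hb hd; rewrite eqr_div ?tofrac_eq0 // -!tofracM tofrac_eq. Qed.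

Lemma tofrac_divB (R : idomainType) (p q r t : R) : q != 0 -> t != 0 ->
  p%:F / q%:F - r%:F / t%:F = (p * t - r * q)%:F / (q * t)%:F.
Proof. by move=> hq ht; rewrite tofracB !tofracM subf_div ?tofrac_eq0. Qed.

Lemma msymK (R : ringType) n (s : 'S_n) : cancel (@msym n R s) (msym s^-1).
Proof. by move=> p; rewrite -msymMm mulgV msym1m. Qed.

Lemma msym_eq0 (R : ringType) n (s : 'S_n) (p : {mpoly R[n]}) :
  (msym s p == 0) = (p == 0).
Proof. by rewrite -[RHS](inj_eq (can_inj (msymK s))) msym0. Qed.

Section RatFunCalculus.
Variables (C : numClosedFieldType) (n : nat).
Local Notation RF := (ratfun C n).
Local Notation P := {mpoly C[n]}.
Implicit Types (x y : RF) (p q : P).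

Lemma fderiv_frac i p q : q != 0 ->
  fderiv i (p%:F / q%:F) = (p^`M(i) * q - p * q^`M(i))%:F / (q ^+ 2)%:F.
Proof.
move=> hq; rewrite /fderiv; set r := repr _.
have hd : \d_r != 0 := denom_ratioP _.
have /eqP : (\n_r)%:F / (\d_r)%:F = p%:F / q%:F :> RF by rewrite -frac_repr.
rewrite tofrac_div_eq // => /eqP E.
have E' := congr1 (mderiv i) E; rewrite !mderivM in E'.
apply/eqP; rewrite tofrac_div_eq ?expf_neq0 //; apply/eqP.
(* The quotient rule does not depend on the representative: differentiate n_r q = p d_r. *)
transitivity ((p^`M(i) * q - p * q^`M(i)) * \d_r ^+ 2
   + \d_r * q * ((\n_r^`M(i) * q + \n_r * q^`M(i)) - (p^`M(i) * \d_r + p * \d_r^`M(i)))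
   - (\d_r^`M(i) * q + q^`M(i) * \d_r) * (\n_r * q - p * \d_r)); first by ring.
by rewrite E E' !subrr !mulr0 addr0 subr0.
Qed.

Lemma fderiv_tofrac i p : fderiv i p%:F = (p^`M(i))%:F.
Proof.
rewrite -[p%:F]divr1 -tofrac1 fderiv_frac ?oner_eq0 // mderivC.
by rewrite expr1n mulr1 mulr0 subr0 tofrac1 divr1.
Qed.

Lemma fderivB (i : 'I_n) : zmod_morphism (@fderiv C n i).
Proof.
move=> x y; have [p [q [hq ->]]] := fracP x; have [r [t [ht ->]]] := fracP y.
rewrite tofrac_divB // !fderiv_frac ?mulf_neq0 // tofrac_divB ?expf_neq0 //.
apply/eqP; rewrite tofrac_div_eq ?mulf_neq0 ?expf_neq0 //; apply/eqP.
rewrite !(mderivB, mderivM); ring.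
Qed.

HB.instance Definition _ (i : 'I_n) :=
  GRing.isZmodMorphism.Build RF RF (@fderiv C n i) (fderivB i).

Lemma fderivM i x y : fderiv i (x * y) = fderiv i x * y + x * fderiv i y.
Proof.
have [p [q [hq ->]]] := fracP x; have [r [t [ht ->]]] := fracP y.
rewrite mulf_div -!tofracM !fderiv_frac ?mulf_neq0 // !mulf_div -!tofracM.
rewrite addf_div ?tofrac_eq0 ?mulf_neq0 ?expf_neq0 // -!tofracM -tofracD.
apply/eqP; rewrite tofrac_div_eq ?mulf_neq0 ?expf_neq0 //; apply/eqP.
rewrite !mderivM; ring.
Qed.

Lemma fderivC i (a : C) : fderiv i (cstF n a) = 0.
Proof. by rewrite fderiv_tofrac mderivC tofrac0. Qed.

Lemma fderiv1 i : fderiv i (1 : RF) = 0.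
Proof. by rewrite -tofrac1 fderiv_tofrac -mpolyC1 mderivC tofrac0. Qed.

Lemma fderivV i x : fderiv i x^-1 = - fderiv i x / x ^+ 2.
Proof.
have [->|hx] := eqVneq x 0; first by rewrite invr0 raddf0 oppr0 mul0r.
have := fderiv1 i; rewrite -(mulVf hx) fderivM.
move/eqP; rewrite addr_eq0 => /eqP h.
rewrite -[fderiv i x^-1](mulfK hx) h !mulNr expr2 invfM.
by rewrite mulrAC mulrC.
Qed.

Lemma logderiv_prod i (I : finType) (f : I -> RF) :
    (forall t, f t != 0) ->
  fderiv i (\prod_t f t) / \prod_t f t = \sum_t fderiv i (f t) / f t.
Proof.
move=> hf; apply: (canLR (mulfK _)); first exact/prodf_neq0.
elim/big_rec2: _ => [|t s p _ ih]; first by rewrite fderiv1 mul0r.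
rewrite fderivM ih mulrDl [_ / f t * _]mulrA divfK //; congr (_ + _).
exact: mulrCA.
Qed.

Lemma fsym_frac (s : 'S_n) p q : q != 0 ->
  fsym s (p%:F / q%:F) = (msym s p)%:F / (msym s q)%:F.
Proof.
move=> hq; rewrite /fsym; set r := repr _.
have hd : \d_r != 0 := denom_ratioP _.
have /eqP : (\n_r)%:F / (\d_r)%:F = p%:F / q%:F :> RF by rewrite -frac_repr.
rewrite tofrac_div_eq // => /eqP /(congr1 (msym s)); rewrite !msymM => E.
by apply/eqP; rewrite tofrac_div_eq ?msym_eq0 // E.
Qed.

Lemma fsymB (s : 'S_n) : zmod_morphism (@fsym C n s).
Proof.
move=> x y; have [p [q [hq ->]]] := fracP x; have [r [t [ht ->]]] := fracP y.
by rewrite tofrac_divB // !fsym_frac ?mulf_neq0 // tofrac_divB ?msym_eq0 // msymB !msymM.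
Qed.

Lemma fsymM (s : 'S_n) : monoid_morphism (@fsym C n s).
Proof.
split=> [|x y].
  by rewrite -[1]divr1 -tofrac1 fsym_frac ?oner_eq0 // msym1.
have [p [q [hq ->]]] := fracP x; have [r [t [ht ->]]] := fracP y.
by rewrite mulf_div -!tofracM !fsym_frac ?mulf_neq0 // mulf_div msymM -!tofracM msymM.
Qed.

HB.instance Definition _ (s : 'S_n) :=
  GRing.isZmodMorphism.Build RF RF (@fsym C n s) (fsymB s).
HB.instance Definition _ (s : 'S_n) :=
  GRing.isMonoidMorphism.Build RF RF (@fsym C n s) (fsymM s).

Lemma fsym_tofrac (s : 'S_n) p : fsym s p%:F = (msym s p)%:F.
Proof. by rewrite -[p%:F]divr1 -tofrac1 fsym_frac ?oner_eq0 // msym1 tofrac1 divr1. Qed.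

HB.instance Definition _ :=
  GRing.RMorphism.copy (@cstF C n) (@FracField.tofrac P \o @mpolyC n C).

Lemma fsym_cstF (s : 'S_n) (a : C) : fsym s (cstF n a) = cstF n a.
Proof. by rewrite /cstF fsym_tofrac /msym mmapC. Qed.

Lemma fsym_muF (s : 'S_n) (i : 'I_n) : fsym s (muF C i) = muF C (s i).
Proof.
rewrite fsym_tofrac msymX; congr (_%:F); congr 'X_[_].
apply/mnmP => j; rewrite !mnmE; congr (nat_of_bool _).
by apply/eqP/eqP => [->|<-]; rewrite ?permKV ?permK.
Qed.

Lemma fderiv_muF (i k : 'I_n) : fderiv i (muF C k) = (k == i)%:R.
Proof.
rewrite fderiv_tofrac mderivX mnmE; have [->|_] := eqVneq k i; last by rewrite scale0r tofrac0.
have -> : (U_(i) - U_(i))%MM = 0%MM by apply/mnmP => j; rewrite !mnmE subnn.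
by rewrite mpolyX0 scale1r tofrac1.
Qed.

Lemma muF_subC_neq0 (i : 'I_n) (a : C) : muF C i - cstF n a != 0.
Proof.
rewrite -tofracB tofrac_eq0; apply/eqP => /(congr1 (mcoeff U_(i))).
by rewrite mcoeffB mcoeffX mcoeffC mnm1_eq0 eqxx mulr0 subr0 mcoeff0 => /eqP; rewrite oner_eq0.
Qed.

Lemma muF_subr_neq0 (i k : 'I_n) : i != k -> muF C i - muF C k != 0.
Proof.
move=> hik; rewrite -tofracB tofrac_eq0; apply/eqP => /(congr1 (mcoeff U_(i))).
rewrite mcoeffB !mcoeffX eqxx eq_mnm1 eq_sym (negbTE hik) subr0 mcoeff0 => /eqP.
by rewrite oner_eq0.
Qed.

End RatFunCalculus.

Section Permanent.
Variables (R : comPzRingType) (l : nat).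
Implicit Types (A : 'M[R]_l) (k : 'I_l) (v w u : 'I_l -> R).

Definition per A : R := \sum_(s : 'S_l) \prod_i A i (s i).

Definition set_col A k v : 'M[R]_l := \matrix_(i, j) if j == k then v i else A i j.

Lemma prod_perm_col A (s : 'S_l) k :
  \prod_i A i (s i) = A ((s^-1)%g k) k * \prod_(i | s i != k) A i (s i).
Proof.
rewrite (bigD1 ((s^-1)%g k)) ?permKV //=; congr (_ * _).
by apply: eq_bigl => i; rewrite (can2_eq (permK s) (permKV s)).
Qed.

Lemma per_set_col A k v :
  per (set_col A k v) = \sum_(s : 'S_l) v ((s^-1)%g k) * \prod_(i | s i != k) A i (s i).
Proof.
apply: eq_bigr => s _; rewrite (prod_perm_col _ s k) mxE eqxx; congr (_ * _).
by apply: eq_bigr => i /negbTE hi; rewrite mxE hi.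
Qed.

Lemma per_set_colB A k v w u (c : R) : (forall i, v i - w i = c * u i) ->
  per (set_col A k v) - per (set_col A k w) = c * per (set_col A k u).
Proof.
move=> hvw; rewrite !per_set_col -sumrB mulr_sumr; apply: eq_bigr => s _.
by rewrite -mulrBl hvw mulrA.
Qed.

Lemma set_col_id A k : set_col A k (fun i => A i k) = A.
Proof. by apply/matrixP => i j; rewrite mxE; case: eqP => [->|]. Qed.

Lemma per_col_perm (t : 'S_l) A : per (col_perm t A) = per A.
Proof.
rewrite /per [RHS](reindex_inj (mulIg t)); apply: eq_bigr => s _.
by apply: eq_bigr => i _; rewrite mxE permM.
Qed.

Lemma per_set_col_eq A k k' v : (forall i, A i k = A i k') ->
  per (set_col A k v) = per (set_col A k' v).
Proof.
move=> hkk; rewrite -(per_col_perm (tperm k k')); congr per; apply/matrixP => i j.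
rewrite !mxE; case: tpermP => [->|->|/eqP/negbTE hjk /eqP/negbTE hjk']; rewrite ?eqxx ?hjk ?hjk' //.
by rewrite eq_sym; case: eqP => // _; rewrite hkk.
Qed.

Lemma per_mul_sum A v :
  per A * \sum_i v i = \sum_k per (set_col A k (fun i => A i k * v i)).
Proof.
under [RHS]eq_bigr => k _ do rewrite per_set_col.
rewrite exchange_big /per mulr_suml; apply: eq_bigr => s _.
rewrite mulr_sumr [RHS](reindex_inj (@perm_inj _ s)); apply: eq_bigr => i _.
by rewrite (prod_perm_col _ s (s i)) !permK mulrAC.
Qed.

Lemma per_mul_sum_ones A v (P : pred 'I_l) k0 :
    (forall k i, ~~ P k -> A i k = 1) -> ~~ P k0 ->
  per A * \sum_i v i = \sum_(k | P k) per (set_col A k (fun i => A i k * v i))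
                       + #|[predC P]|%:R * per (set_col A k0 v).
Proof.
move=> ones Pk0; rewrite per_mul_sum (bigID P) /=; congr (_ + _).
rewrite mulr_natl -sumr_const; apply: eq_big => [k|k Pk]; first by rewrite !inE.
have -> : set_col A k (fun i => A i k * v i) = set_col A k v.
  by apply/matrixP => i j; rewrite !mxE ones // mul1r.
by apply: per_set_col_eq => i; rewrite !ones.
Qed.

Lemma per_const1 : per (const_mx 1) = l`!%:R.
Proof.
rewrite /per (eq_bigr (fun _ => 1)) => [|s _]; first by rewrite sumr_const card_Sn.
by apply: big1 => i _; rewrite mxE.
Qed.

End Permanent.

Lemma rmorph_per (R S : comPzRingType) l (f : {rmorphism R -> S}) (A : 'M[R]_l) :
  f (per A) = per (map_mx f A).
Proof.
rewrite rmorph_sum; apply: eq_bigr => s _; rewrite rmorph_prod.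
by apply: eq_bigr => i _; rewrite mxE.
Qed.

Lemma card_ord_geq l m : (m <= l)%N -> #|[pred k : 'I_l | (m <= k)%N]| = (l - m)%N.
Proof.
move=> hml; rewrite -sum1_card (eq_bigl (fun k : 'I_l => m <= k)%N) //.
rewrite -(big_mkord (fun k => m <= k)%N (fun _ => 1%N)).
rewrite (@big_cat_nat _ _ _ m 0 l _ _ (leq0n m) hml) /= big_nat_cond big1 => [|i /andP[/andP[_]]].
  rewrite add0n big_nat_cond (eq_bigl (fun i => (m <= i < l) && true)%N) => [|i].
    by rewrite -big_nat_cond sum_nat_const_nat muln1.
  by rewrite andbT andbAC andbb.
by rewrite ltnNge => /negP nle /nle.
Qed.

Lemma prod_scale_mpolyX (K : comNzRingType) n (J : finType) (c : J -> K) (f : J -> 'I_n) :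
  \prod_j (c j *: ('X_(f j) : {mpoly K[n]})) = (\prod_j c j) *: 'X_[\sum_j U_(f j)].
Proof.
rewrite (big_morph (fun m => ('X_[m] : {mpoly K[n]})) (@mpolyXD _ _) (@mpolyX0 _ _)).
rewrite -mul_mpolyC rmorph_prod -big_split /=.
by apply: eq_bigr => j _; rewrite mul_mpolyC.
Qed.

Lemma sum_mnm1_eq_ones l (f : 'I_l -> 'I_l) :
  (\sum_j U_(f j) == [multinom 1%N | i < l])%MM = injectiveb f.
Proof.
apply/eqP/injectiveP => [h a b hab|finj]; last first.
  apply/mnmP => i; rewrite mnmE mnm_sumE (bigD1 ((perm finj)^-1%g i)) //=.
  rewrite mnmE -[f _](permE finj) permKV eqxx big1 // => j hj.
  rewrite mnmE -(permE finj); apply/eqP; rewrite eqb0; apply: contra hj => /eqP <-.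
  by rewrite permK.
apply/eqP/negPn/negP => nab; move/(congr1 (fun mm : 'X_{1..l} => mm (f a))): h.
rewrite mnmE mnm_sumE (bigD1 a) //= (bigD1 b) 1?eq_sym //= !mnmE hab eqxx.
by rewrite add1n addSn.
Qed.

Lemma mcoeff_prod_linear (K : comNzRingType) l (w : 'I_l -> 'I_l -> K) :
  (\prod_(j < l) \sum_(i < l) w j i *: ('X_i : {mpoly K[l]}))@_[multinom 1%N | i < l]
  = per (\matrix_(j, i) w j i).
Proof.
rewrite bigA_distr_bigA /= raddf_sum /=.
under eq_bigr => f _ do rewrite prod_scale_mpolyX mcoeffZ mcoeffX sum_mnm1_eq_ones.
rewrite (bigID (fun f : {ffun 'I_l -> 'I_l} => injectiveb f)) /=.
rewrite [X in _ + X]big1 ?addr0 => [|f /negbTE ->]; last by rewrite mulr0.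
rewrite (reindex (fun s : 'S_l => pval s)) /=; last first.
  exists (insubd (1%g : 'S_l)) => [s _|f hf]; first by rewrite valKd.
  by rewrite insubdK.
rewrite (eq_bigl xpredT) => [|s]; last exact: (valP s).
apply: eq_bigr => s _; rewrite (valP s) mulr1.
by apply: eq_bigr => j _; rewrite mxE -pvalE.
Qed.

Section DunklChain.
Variables (C : numClosedFieldType) (n l : nat) (lam : 'I_l -> C).
Local Notation RF := (ratfun C n).

(* The value 1 for n <= i is the padding of the variables x_N, ..., x_l in Z1. *)
Definition cauchy_entry (i : nat) (j : 'I_l) : RF :=
  match @insub nat (fun k => (k < n)%N) 'I_n i with
  | Some i' => (muF C i' - cstF n (lam j))^-1
  | None => 1
  end.

Definition cauchy_mx m : 'M[RF]_l :=
  \matrix_(j, i) if (i < m)%N then cauchy_entry i j else 1.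

Definition merged_per m (k : 'I_l) : RF :=
  per (set_col (cauchy_mx m) k (fun j => cauchy_mx m j k * cauchy_entry m j)).

Lemma cauchy_entry_ord (i : 'I_n) j : cauchy_entry i j = (muF C i - cstF n (lam j))^-1.
Proof. by rewrite /cauchy_entry valK. Qed.

Lemma fderiv_cauchy_entry (i0 : 'I_n) i j : i != i0 :> nat ->
  fderiv i0 (cauchy_entry i j) = 0.
Proof.
rewrite /cauchy_entry; case: insubP => [i' _ <- hi|_ _]; last exact: fderiv1.
by rewrite fderivV raddfB /= fderiv_muF fderivC -val_eqE (negbTE hi) subr0 oppr0 mul0r.
Qed.

Lemma fderiv_per_cauchy (i0 : 'I_n) m : (m <= i0)%N -> fderiv i0 (per (cauchy_mx m)) = 0.
Proof.
move=> hm; rewrite raddf_sum big1 // => s _.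
apply: (big_ind (fun x => fderiv i0 x = 0)) => [|x y hx hy|j _].
- exact: fderiv1.
- by rewrite fderivM hx hy !mul0r mulr0 addr0.
rewrite mxE; case: ifP => hlt; last exact: fderiv1.
by apply: fderiv_cauchy_entry; rewrite neq_ltn (leq_trans hlt hm).
Qed.

Lemma fsym_cauchy_entry (s : 'S_n) i j (hi : (i < n)%N) :
  fsym s (cauchy_entry i j) = cauchy_entry (s (Ordinal hi)) j.
Proof.
have -> : cauchy_entry i j = cauchy_entry (Ordinal hi) j by [].
by rewrite !cauchy_entry_ord fmorphV rmorphB /= fsym_muF fsym_cstF.
Qed.

Lemma fswap_cauchy_mx_lt (i0 k : 'I_n) (k' : 'I_l) m :
    i0 = m :> nat -> k' = k :> nat -> (k < m)%N ->
  map_mx (fsym (tperm i0 k)) (cauchy_mx m) = set_col (cauchy_mx m) k' (cauchy_entry m).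
Proof.
move=> hi0 hk' hkm; apply/matrixP => j i; rewrite !mxE.
have [him|hmi] := ltnP i m; last first.
  by rewrite rmorph1 -val_eqE /= hk' gtn_eqF // (leq_trans hkm hmi).
have hin : (i < n)%N by apply: ltn_trans (ltn_ord i0); rewrite hi0.
rewrite (fsym_cauchy_entry _ _ hin); case: eqP => [hik|hik].
  have -> : Ordinal hin = k by apply: val_inj; rewrite /= hik hk'.
  by rewrite tpermR hi0.
rewrite tpermD // -val_eqE /=; last by apply/eqP => hki; apply: hik; apply: val_inj; rewrite /= hk' hki.
by rewrite hi0 gtn_eqF.
Qed.

Lemma fswap_cauchy_mx_gt (i0 k : 'I_n) m : i0 = m :> nat -> (m < k)%N ->
  map_mx (fsym (tperm i0 k)) (cauchy_mx m) = cauchy_mx m.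
Proof.
move=> hi0 hmk; apply/matrixP => j i; rewrite !mxE.
have [him|_] := ltnP i m; last exact: rmorph1.
have hin : (i < n)%N by apply: ltn_trans (ltn_ord i0); rewrite hi0.
rewrite (fsym_cauchy_entry _ _ hin) tpermD // -val_eqE /= ?hi0 gtn_eqF //.
exact: ltn_trans hmk.
Qed.

Lemma logderiv_Delta (i0 : 'I_n) :
  fderiv i0 (DeltaF n lam) / DeltaF n lam = \sum_j cauchy_entry i0 j.
Proof.
have hf i j : muF C i - cstF n (lam j) != 0 by apply: muF_subC_neq0.
rewrite logderiv_prod => [|i]; last exact/prodf_neq0.
under eq_bigr => i _ do rewrite logderiv_prod //.
rewrite (bigD1 i0) //= [X in _ + X]big1 ?addr0 => [|i hi]; last first.
  by apply: big1 => j _; rewrite raddfB /= fderiv_muF fderivC (negbTE hi) subr0 mul0r.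
by apply: eq_bigr => j _; rewrite raddfB /= fderiv_muF fderivC eqxx subr0 div1r cauchy_entry_ord.
Qed.

Lemma set_col_cauchy_mx (m0 : 'I_l) :
  set_col (cauchy_mx m0) m0 (cauchy_entry m0) = cauchy_mx m0.+1.
Proof.
apply/matrixP => j i; rewrite !mxE -val_eqE.
case: (ltngtP i m0) => [him|hmi|/val_inj ->]; rewrite ?eqxx ?ltnSn //.
  by rewrite ltnS ltnW.
by rewrite ltnS leqNgt hmi.
Qed.

Lemma per_cauchy_mx_mul (m0 : 'I_l) :
  per (cauchy_mx m0) * \sum_j cauchy_entry m0 j
  = \sum_(k < l | (k < m0)%N) merged_per m0 k + (l - m0)%:R * per (cauchy_mx m0.+1).
Proof.
rewrite (per_mul_sum_ones _ _ (P := fun k : 'I_l => (k < m0)%N) (k0 := m0)) ?ltnn //; last first.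
  by move=> k j /negbTE hk; rewrite mxE hk.
rewrite set_col_cauchy_mx -card_ord_geq 1?ltnW //; congr (_ + _%:R * _).
by apply: eq_card => k; rewrite !inE -leqNgt.
Qed.

Lemma dunkl_swap_sum (i0 : 'I_n) (m0 : 'I_l) : i0 = m0 :> nat ->
  \sum_(k < n | k != i0)
     (per (cauchy_mx m0) - fswap i0 k (per (cauchy_mx m0))) / (muF C i0 - muF C k)
  = \sum_(k < l | (k < m0)%N) merged_per m0 k.
Proof.
move=> hi0; rewrite (bigID (fun k : 'I_n => (k < m0)%N)) /= [X in _ + X]big1 ?addr0; last first.
  move=> k /andP[hk]; rewrite -leqNgt leq_eqVlt -hi0 val_eqE eq_sym (negbTE hk) /= => hlt.
  by rewrite /fswap rmorph_per fswap_cauchy_mx_gt // subrr mul0r.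
rewrite (eq_bigl (fun k : 'I_n => (k < m0)%N)) => [|k]; last first.
  by case: ltnP => hk; rewrite ?andbF ?andbT // -val_eqE /= hi0 ltn_eqF.
have hmn : (m0 <= n)%N by rewrite -hi0 ltnW.
rewrite (big_ord_narrow hmn) (big_ord_narrow (ltnW (ltn_ord m0))); apply: eq_bigr => k _.
set kn := widen_ord _ k; set kl := widen_ord _ k.
rewrite /fswap rmorph_per (@fswap_cauchy_mx_lt i0 kn kl) //; last exact: ltn_ord k.
rewrite -{1}(set_col_id (cauchy_mx m0) kl).
rewrite (per_set_colB _ _ (u := fun j => cauchy_mx m0 j kl * cauchy_entry m0 j)
                          (c := muF C i0 - muF C kn)).
  by rewrite mulrC mulKf // muF_subr_neq0 // -val_eqE /= hi0 gtn_eqF.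
move=> j; rewrite mxE /= ltn_ord.
have -> : cauchy_entry m0 j = cauchy_entry i0 j by rewrite hi0.
have -> : cauchy_entry k j = cauchy_entry kn j by [].
by rewrite !cauchy_entry_ord invf_subB ?muF_subC_neq0.
Qed.

Lemma dunklK_cauchy (kappa c : C) (i0 : 'I_n) (m0 : 'I_l) : i0 = m0 :> nat ->
  dunklK lam kappa (- kappa) i0 (cstF n c * per (cauchy_mx m0))
  = cstF n (kappa * c * (l - m0)%:R) * per (cauchy_mx m0.+1).
Proof.
move=> hi0; rewrite /dunklK fderivM fderivC fderiv_per_cauchy ?hi0 // mul0r mulr0 addr0 addr0.
under eq_bigr => k _ do rewrite /fswap rmorphM /= fsym_cstF -mulrBr -mulrA.
rewrite -mulr_sumr dunkl_swap_sum // logderiv_Delta hi0 -!mulrA per_cauchy_mx_mul.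
rewrite !rmorphM rmorphN rmorph_nat /=.
ring.
Qed.

Lemma cauchy_mx0 : cauchy_mx 0 = const_mx 1.
Proof. by apply/matrixP => j i; rewrite !mxE. Qed.

Lemma cauchy_mx_Zweight : cauchy_mx n = \matrix_(j, i) @Zweight C n l lam j i.
Proof.
apply/matrixP => j i; rewrite !mxE /Zweight.
by case: ltnP => hi //; rewrite insubN // -leqNgt.
Qed.

Lemma dunkl_chain_take (kappa : C) m : (n <= l)%N -> (m <= n)%N ->
  foldl (fun acc i => dunklK lam kappa (- kappa) i acc) 1 (take m (enum 'I_n))
  = cstF n (kappa ^+ m / (l - m)`!%:R) * per (cauchy_mx m).
Proof.
move=> hnl; elim: m => [_|m IH hm].
  rewrite take0 /= subn0 expr0 div1r cauchy_mx0 per_const1 -(rmorph_nat (@cstF C n)).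
  by rewrite -rmorphM mulVf ?rmorph1 // pnatr_eq0 -lt0n fact_gt0.
have hml : (m < l)%N := leq_trans hm hnl.
rewrite (take_nth (Ordinal hm)); last by rewrite size_enum_ord.
rewrite foldl_rcons IH; last exact: ltnW.
have -> : nth (Ordinal hm) (enum 'I_n) m = Ordinal hm by apply: val_inj; rewrite /= nth_enum_ord.
rewrite (@dunklK_cauchy _ _ (Ordinal hm) (Ordinal hml)) //; congr (cstF n _ * _).
rewrite -(subnSK hml) factS natrM exprS.
by field; rewrite pnatr_eq0 -lt0n fact_gt0 addrC natr1 pnatr_eq0.
Qed.

End DunklChain.

Theorem lemma6p2 (C : numClosedFieldType) (N l : nat) (kappa : C)
    (lam : 'I_l -> C) :
  (0 < N)%N -> (N.-1 <= l)%N ->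
  dunkl_chain lam kappa (- kappa) (1 : ratfun C N.-1)
  = cstF N.-1 (kappa ^+ N.-1) * Z1 N.-1 lam.
Proof.
move=> _; move: N.-1 => n hnl.
rewrite /dunkl_chain -[enum 'I_n](take_size) size_enum_ord dunkl_chain_take //.
rewrite /Z1 /Zpoly mcoeffZ mcoeff_prod_linear -cauchy_mx_Zweight.
by rewrite rmorphM fmorphV rmorph_nat mulrA.
Qed.
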